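(* Let $\mathtt{L}$ be a line of $\mathcal{S}$ and $\theta$ a point of $\mathcal{S}$. If $\theta$ has distance $2$ from two points of $\mathtt{L}$, then $\theta$ is collinear with the third point of $\mathtt{L}$.
   Context: Let $S=(P,L)$ and $S'=(P',L')$ be generalized quadrangles of order $(2,2)$ (every line has 3 points, every point lies on 3 lines, and for each point $x$ and line $l\not\ni x$ exactly one point of $l$ is collinear with $x$), with an isomorphism $x\mapsto x'$ from $S$ to $S'$. In a point-line geometry, $x^{\perp}$ is $x$ together with all points collinear with $x$, and $A^{\perp}=\bigcap_{a\in A}a^{\perp}$. A triad is a set of three pairwise non-collinear points, complete if $|T^{\perp}|=3$. The geometry $\mathcal{S}=(\mathcal{P},\mathcal{L})$ has point set $\mathcal{P}=\{(x,y')\in P\times P':y'\in x'^{\perp}\}$ and lines all $3$-subsets $\{(x,u'),(y,v'),(z,w')\}$ of $\mathcal{P}$ where $T=\{x,y,z\}$ (three distinct points) is a line or a complete triad of $S$ and $\{u',v',w'\}=T'^{\perp}$ in $S'$ with $u',v',w'$ distinct. Distance is measured in the collinearity graph of $\mathcal{S}$. *)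

From mathcomp Require Import all_boot.
Set Implicit Arguments. Unset Strict Implicit. Unset Printing Implicit Defensive.

Section Geometry.
Variable T : finType.
Variable lines : {set {set T}}.

Definition collinear (x y : T) : bool :=
  (x != y) && [exists l in lines, (x \in l) && (y \in l)].

Definition perp (x : T) : {set T} := [set y | (y == x) || collinear x y].

Definition perpset (A : {set T}) : {set T} := \bigcap_(a in A) perp a.

Definition triad (A : {set T}) : bool :=
  (#|A| == 3) && [forall x in A, forall y in A, ~~ collinear x y].

Definition complete_triad (A : {set T}) : bool :=
  triad A && (#|perpset A| == 3).

Fixpoint walk (n : nat) (x y : T) : Prop :=
  match n with
  | 0 => x = y
  | n'.+1 => exists z, collinear x z /\ walk n' z y
  end.

Definition dist_eq (x y : T) (n : nat) : Prop :=
  walk n x y /\ forall m, m < n -> ~ walk m x y.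

End Geometry.

Record GQ22 (P : finType) (L : {set {set P}}) : Prop := {
  gq_line3 : forall l, l \in L -> #|l| = 3;
  gq_point3 : forall x, #|[set l in L | x \in l]| = 3;
  gq_unique_line : forall x y l m, x != y -> l \in L -> m \in L ->
      x \in l -> y \in l -> x \in m -> y \in m -> l = m;
  gq_axiom : forall x l, l \in L -> x \notin l ->
      #|[set y in l | collinear L x y]| = 1
}.

Definition is_iso (P P' : finType) (L : {set {set P}}) (L' : {set {set P'}})
  (f : P -> P') : Prop :=
  bijective f /\ forall l : {set P}, (l \in L) = (f @: l \in L').

Section Construction.
Variables (P P' : finType) (L : {set {set P}}) (L' : {set {set P'}}) (f : P -> P').

Definition calP : {set P * P'} := [set xy | xy.2 \in perp L' (f xy.1)].

Definition calL : {set {set P * P'}} :=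
  [set X : {set P * P'} | [exists x : P, exists y : P, exists z : P,
     exists u : P', exists v : P', exists w : P',
     [&& X == [set (x, u); (y, v); (z, w)],
         X \subset calP,
         [&& x != y, y != z & x != z],
         ([set x; y; z] \in L) || complete_triad L [set x; y; z],
         perpset L' (f @: [set x; y; z]) == [set u; v; w] &
         [&& u != v, v != w & u != w]]]].

End Construction.

From mathcomp Require Import all_boot zify.
Set Implicit Arguments. Unset Strict Implicit. Unset Printing Implicit Defensive.

(* Write x ~ y ([coleq]) when x = y or x, y are collinear in S'.  A point of
   the product geometry is a pair (x, u) with x' ~ u, and two points (x, u), (y, v) are
   collinear exactly when x <> y, u <> v, x' ~ v and y' ~ u: the lines through
   them come either from a line of S' or, when x' and y' are not collinear,
   from the complete triad formed by x', y' and the third point of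
   {u, v}^perp, which exists because every point of GQ(2,2) is regular.
   Regularity also shows that along a path theta, sigma, pi of length 2 one
   has theta_1' ~ pi_2 iff pi_1' ~ theta_2.  The theorem then follows from a
   case analysis on theta_1' ~ alpha and theta_1' ~ beta, where (a, alpha),
   (b, beta) are the two given points of the line: the only non-trivial case
   uses that every point of GQ(2,2) is collinear with a point of any triad
   {x, y}^perp. *)

Lemma cards3 (T : finType) (a b c : T) :
  a != b -> a != c -> b != c -> #|[set a; b; c]| = 3.
Proof. by move=> ab ac bc; rewrite -setUA cardsU1 cards2 !inE negb_or ab ac bc. Qed.

Lemma card3_set3 (T : finType) (S : {set T}) a b c :
  #|S| = 3 -> a \in S -> b \in S -> c \in S -> a != b -> a != c -> b != c ->
  S = [set a; b; c].
Proof.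
move=> S3 aS bS cS ab ac bc; apply/esym/eqP; rewrite eqEcard S3 cards3 // leqnn andbT.
by apply/subsetP=> x; rewrite !inE => /orP[/orP[]|] /eqP->.
Qed.

Lemma card3_other (T : finType) (S : {set T}) a b :
  #|S| = 3 -> exists2 c, c \in S & (c != a) && (c != b).
Proof.
move=> S3; have : #|S :\ a :\ b| != 0.
  by move: (cardsD1 a S) (cardsD1 b (S :\ a)); rewrite S3; do 2 case: (_ \in _); lia.
rewrite cards_eq0 => /set0Pn[c]; rewrite !inE => /and3P[cb ca cS].
by exists c; rewrite ?ca ?cb.
Qed.

Lemma set3_inj_in (T : finType) (A : eqType) (h : T -> A) a b c :
  h a != h b -> h a != h c -> h b != h c -> {in [set a; b; c] &, injective h}.
Proof.
move=> ab ac bc s1 s2; rewrite !inE => /orP[/orP[]|] /eqP-> /orP[/orP[]|] /eqP-> //;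
by move/eqP; rewrite ?(negbTE ab) ?(negbTE ac) ?(negbTE bc) // eq_sym
  ?(negbTE ab) ?(negbTE ac) ?(negbTE bc).
Qed.

Section GQ22Theory.
Variables (T : finType) (L : {set {set T}}).
Local Notation col := (collinear L).

Definition coleq (x y : T) : bool := (x == y) || col x y.

Lemma collinear_sym : symmetric col.
Proof.
move=> x y; rewrite /collinear eq_sym; case: (y != x) => //=.
by apply/exists_inP/exists_inP => -[l lL H]; exists l; rewrite // andbC.
Qed.

Lemma collinearxx x : col x x = false.
Proof. by rewrite /collinear eqxx. Qed.

Lemma col_neq x y : col x y -> x != y.
Proof. by case/andP. Qed.

Lemma coleqxx x : coleq x x.
Proof. by rewrite /coleq eqxx. Qed.

Lemma coleq_sym : symmetric coleq.
Proof. by move=> x y; rewrite /coleq eq_sym collinear_sym. Qed.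

Lemma coleq_col x y : x != y -> coleq x y = col x y.
Proof. by rewrite /coleq => /negbTE->. Qed.

Lemma col_coleq x y : col x y -> coleq x y.
Proof. by rewrite /coleq => ->; rewrite orbT. Qed.

Lemma mem_perp x y : (y \in perp L x) = coleq x y.
Proof. by rewrite inE eq_sym. Qed.

Lemma mem_perpset3 a b c z :
  (z \in perpset L [set a; b; c]) = [&& coleq a z, coleq b z & coleq c z].
Proof.
apply/bigcapP/and3P => [inP | [az bz cz] i].
  by rewrite -!mem_perp; split; apply: inP; rewrite !inE eqxx ?orbT.
by rewrite mem_perp !inE => /orP[/orP[]|] /eqP->.
Qed.

Lemma collinear_line x y : col x y -> exists2 l, l \in L & (x \in l) && (y \in l).
Proof. by case/andP=> _ /exists_inP. Qed.

Lemma line_coleq l x y : l \in L -> x \in l -> y \in l -> coleq x y.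
Proof.
move=> lL xl yl; rewrite /coleq /collinear; case: eqP => //= _.
by apply/exists_inP; exists l; rewrite ?xl ?yl.
Qed.

Hypothesis gqL : GQ22 L.

Lemma line_set3 l u v w : l \in L -> u \in l -> v \in l -> w \in l ->
  u != v -> u != w -> v != w -> l = [set u; v; w].
Proof. by move=> lL; apply: card3_set3; apply: gq_line3 gqL _ lL. Qed.

Lemma line_other l u v : l \in L -> exists2 w, w \in l & (w != u) && (w != v).
Proof. by move=> lL; apply: card3_other; apply: gq_line3 gqL _ lL. Qed.

Lemma line_through3 p l1 l2 l3 m :
  l1 \in L -> l2 \in L -> l3 \in L -> m \in L ->
  p \in l1 -> p \in l2 -> p \in l3 -> p \in m ->
  l1 != l2 -> l1 != l3 -> l2 != l3 -> [|| m == l1, m == l2 | m == l3].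
Proof.
move=> l1L l2L l3L mL pl1 pl2 pl3 pm l12 l13 l23.
have inP l : l \in L -> p \in l -> l \in [set l in L | p \in l] by rewrite inE => -> ->.
have := inP _ mL pm; rewrite (card3_set3 (gq_point3 gqL p) (inP _ l1L pl1)
  (inP _ l2L pl2) (inP _ l3L pl3)) // !inE.
by rewrite orbA.
Qed.

Lemma gq_proj l x : l \in L -> x \notin l -> exists2 y, y \in l & col x y.
Proof.
move=> lL xl; have /eqP/cards1P[y Ey] := gq_axiom gqL lL xl.
have : y \in [set y in l | col x y] by rewrite Ey set11.
by rewrite inE => /andP[]; exists y.
Qed.

Lemma coleq_line_uniq l x p q : l \in L -> x \notin l -> p \in l -> q \in l ->
  coleq x p -> coleq x q -> p = q.
Proof.
move=> lL xl pl ql; have /eqP/cards1P[y Ey] := gq_axiom gqL lL xl.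
have proj s : s \in l -> coleq x s -> s = y.
  move=> sl; rewrite coleq_col; last by apply: contraNneq xl => ->.
  by move=> xs; apply/set1P; rewrite -Ey inE sl.
by move=> /(proj _ pl)-> /(proj _ ql)->.
Qed.

Lemma line_coleq2 l p q z : l \in L -> p \in l -> q \in l -> p != q ->
  coleq z p -> coleq z q -> z \in l.
Proof.
move=> lL pl ql pq zp zq; apply: contraTT pq => zl.
by rewrite negbK (coleq_line_uniq lL zl pl ql zp zq).
Qed.

Lemma line_third_col l p q e t : l \in L -> p \in l -> q \in l -> e \in l ->
  p != q -> e != p -> e != q -> ~~ coleq t p -> ~~ coleq t q -> col t e.
Proof.
move=> lL pl ql el pq ep eq tp tq.
have tl : t \notin l by apply: contra tp => tl; apply: line_coleq lL tl pl.
have [y yl ty] := gq_proj lL tl.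
move: yl ty; rewrite (line_set3 lL pl ql el pq) 1?eq_sym // !inE.
case/orP=> [/orP[]|] /eqP-> // /col_coleq; by [rewrite (negbTE tp) | rewrite (negbTE tq)].
Qed.

Lemma col_common2_coleq t s e1 e2 y : col t s -> e1 != e2 ->
  col t e1 -> col s e1 -> col t e2 -> col s e2 -> coleq y e1 -> coleq y e2 -> coleq y s.
Proof.
move=> ts e12 te1 se1 te2 se2 ye1 ye2; have [l lL /andP[tl sl]] := collinear_line ts.
have on_l e : col t e -> col s e -> e \in l.
  by move=> te se; apply: (line_coleq2 lL tl sl (col_neq ts)); rewrite coleq_sym col_coleq.
exact: line_coleq lL (line_coleq2 lL (on_l _ te1 se1) (on_l _ te2 se2) e12 ye1 ye2) sl.
Qed.

Lemma line_third_col2 l p q t1 t2 : l \in L -> p \in l -> q \in l -> p != q ->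
  ~~ coleq t1 p -> ~~ coleq t1 q -> ~~ coleq t2 p -> ~~ coleq t2 q ->
  exists2 e, (e \in l) && (e != p) & col t1 e && col t2 e.
Proof.
move=> lL pl ql pq t1p t1q t2p t2q; have [e el /andP[ep eq]] := line_other p q lL.
by exists e; rewrite ?el ?ep ?(line_third_col lL pl ql el).
Qed.

Lemma perpset_line l : l \in L -> perpset L l = l.
Proof.
move=> lL; apply/setP => s; apply/bigcapP/idP => [sP | sl i il].
  have [p pl _] := line_other s s lL; have [q ql /andP[qp _]] := line_other p p lL.
  by apply: (line_coleq2 lL ql pl qp); rewrite coleq_sym -mem_perp sP.
by rewrite mem_perp (line_coleq lL il sl).
Qed.

Lemma third_line_through w x y b c : col x w -> col y w -> col w b -> col w c ->
  ~~ coleq x y -> ~~ coleq x b -> ~~ coleq y b -> ~~ coleq x c -> ~~ coleq y c ->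
  exists2 l, l \in L & [&& w \in l, b \in l & c \in l].
Proof.
move=> xw yw wb wc xy xb yb xc yc.
have apart p d (l1 l2 : {set T}) : ~~ coleq p d -> l1 \in L -> p \in l1 -> d \in l2 -> l1 != l2.
  by move=> pd l1L pl1 dl2; apply: contraNneq pd => l12; rewrite (line_coleq l1L pl1) // l12.
have [lx lxL /andP[xlx wlx]] := collinear_line xw.
have [ly lyL /andP[yly wly]] := collinear_line yw.
have [lb lbL /andP[wlb blb]] := collinear_line wb.
have [lc lcL /andP[wlc clc]] := collinear_line wc.
have := line_through3 lxL lyL lbL lcL wlx wly wlb wlc (apart _ _ _ _ xy lxL xlx yly)
  (apart _ _ _ _ xb lxL xlx blb) (apart _ _ _ _ yb lyL yly blb).
case/or3P=> /eqP lc_eq; first by move: xc; rewrite (line_coleq lxL xlx) // -lc_eq.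
  by move: yc; rewrite (line_coleq lyL yly) // -lc_eq.
by exists lb; rewrite // wlb blb -lc_eq.
Qed.

Section NoncollinearPair.
Variables x y : T.
Hypotheses (xy : x != y) (ncxy : ~~ col x y).

Lemma perp2_line_uniq l u v : l \in L -> x \in l -> u \in l -> v \in l ->
  coleq y u -> coleq y v -> u = v.
Proof.
move=> lL xl ul vl yu yv; apply/eqP; apply: contraNT ncxy => uv.
by rewrite -coleq_col // (line_coleq lL xl (line_coleq2 lL ul vl uv yu yv)).
Qed.

Lemma perp2_col u : coleq x u -> coleq y u -> col x u.
Proof.
move=> xu yu; rewrite -coleq_col //; apply: contraNneq ncxy => ux.
by move: yu; rewrite -ux coleq_sym coleq_col.
Qed.

Lemma perp2_noncol u v : coleq x u -> coleq y u -> coleq x v -> coleq y v ->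
  u != v -> ~~ col u v.
Proof.
move=> xu yu xv yv uv; apply/negP => /collinear_line[l lL /andP[ul vl]].
have xl := line_coleq2 lL ul vl uv xu xv.
by move/eqP: uv; apply; apply: (perp2_line_uniq lL xl ul vl).
Qed.

Lemma perp2_other u v : coleq x u -> coleq y u -> coleq x v -> coleq y v ->
  exists w, [/\ coleq x w, coleq y w, w != u & w != v].
Proof.
move=> xu yu xv yv.
have [lu luL /andP[xlu ulu]] := collinear_line (perp2_col xu yu).
have [lv lvL /andP[xlv vlv]] := collinear_line (perp2_col xv yv).
have [m] := card3_other lu lv (gq_point3 gqL x).
rewrite inE => /andP[mL xm] /andP[mlu mlv].
have ym : y \notin m by apply: contra ncxy => ym; rewrite -coleq_col // (line_coleq mL xm ym).
have [w wm yw] := gq_proj mL ym.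
have xw : x != w by apply: contraNneq ncxy => ->; rewrite collinear_sym.
have other l s : l \in L -> x \in l -> s \in l -> m != l -> w != s.
  by move=> lL xl sl; apply: contra_neq => ws; apply: (gq_unique_line gqL xw) => //; rewrite ws.
exists w; split.
- exact: line_coleq mL xm wm.
- exact: col_coleq.
- exact: other _ _ luL xlu ulu mlu.
- exact: other _ _ lvL xlv vlv mlv.
Qed.

End NoncollinearPair.

Section PerpTriple.
Variables x y u v w : T.
Hypotheses (xy : x != y) (ncxy : ~~ col x y).
Hypotheses (xu : coleq x u) (yu : coleq y u) (xv : coleq x v) (yv : coleq y v).
Hypotheses (xw : coleq x w) (yw : coleq y w) (uv : u != v) (uw : u != w) (vw : v != w).

Lemma perp2_lines_through l : l \in L -> x \in l -> [|| u \in l, v \in l | w \in l].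
Proof.
move=> lL xl.
have [lu luL /andP[xlu ulu]] := collinear_line (perp2_col xy ncxy xu yu).
have [lv lvL /andP[xlv vlv]] := collinear_line (perp2_col xy ncxy xv yv).
have [lw lwL /andP[xlw wlw]] := collinear_line (perp2_col xy ncxy xw yw).
have distinct (l1 l2 : {set T}) s1 s2 : l1 \in L -> x \in l1 -> s1 \in l1 -> s2 \in l2 ->
    coleq y s1 -> coleq y s2 -> s1 != s2 -> l1 != l2.
  move=> l1L xl1 s1l1 s2l2 ys1 ys2; apply: contra_neq => l12.
  by apply: (perp2_line_uniq xy ncxy l1L xl1 s1l1); rewrite ?l12.
have := line_through3 luL lvL lwL lL xlu xlv xlw xl (distinct _ _ _ _ luL xlu ulu vlv yu yv uv)
  (distinct _ _ _ _ luL xlu ulu wlw yu yw uw) (distinct _ _ _ _ lvL xlv vlv wlw yv yw vw).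
by case/or3P=> /eqP->; rewrite ?ulu ?vlv ?wlw ?orbT.
Qed.

Lemma perp2_sub3 a : coleq x a -> coleq y a -> [|| a == u, a == v | a == w].
Proof.
move=> xa ya; have [l lL /andP[xl al]] := collinear_line (perp2_col xy ncxy xa ya).
have same s : s \in l -> coleq y s -> a = s.
  move=> sl ys; exact: (perp2_line_uniq xy ncxy lL xl al sl ya ys).
case/or3P: (perp2_lines_through lL xl) => sl;
  by rewrite ?(same u sl yu) ?(same v sl yv) ?(same w sl yw) eqxx ?orbT.
Qed.

Lemma perp2_cover_x t : coleq t x -> [|| coleq t u, coleq t v | coleq t w].
Proof.
case: (eqVneq t x) => [-> _ | tx]; first by rewrite xu.
rewrite coleq_col // => /collinear_line[l lL /andP[tl xl]].
by case/or3P: (perp2_lines_through lL xl) => sl; rewrite (line_coleq lL tl sl) ?orbT.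
Qed.

(* If z were not collinear with w, the projections of w on the lines zu and zv
   would both lie on the third line through w, hence coincide, since the line
   meets {w, z}^perp only once. *)
Lemma perp2_regular_noncol z : coleq z u -> coleq z v -> z != x -> z != y -> coleq z w.
Proof.
move=> zu zv zx zy; apply: contraT => nzw.
have ncuv := perp2_noncol xy ncxy xu yu xv yv uv.
have nwu : ~~ col w u by rewrite collinear_sym (perp2_noncol xy ncxy xu yu xw yw uw).
have nwv : ~~ col w v by rewrite collinear_sym (perp2_noncol xy ncxy xv yv xw yw vw).
have far p : coleq p u -> coleq p v -> z != p -> ~~ coleq z p.
  move=> pu pv zp; rewrite coleq_col // collinear_sym.
  by apply: (perp2_noncol uv ncuv); rewrite 1?coleq_sym // eq_sym.
have [nzx nzy] := (far x xu xv zx, far y yu yv zy).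
have zu' : z != u by apply: contraNneq ncuv => zu_eq; move: zv; rewrite zu_eq coleq_col.
have zv' : z != v.
  by apply: contraNneq ncuv => zv_eq; move: zu; rewrite zv_eq coleq_sym coleq_col.
have [czu czv] : col z u /\ col z v by rewrite -!coleq_col.
have [mu muL /andP[zmu umu]] := collinear_line czu.
have [mv mvL /andP[zmv vmv]] := collinear_line czv.
have wmu : w \notin mu.
  by apply: contra nwu => wmu; rewrite -coleq_col ?(line_coleq muL wmu umu) // eq_sym.
have wmv : w \notin mv.
  by apply: contra nwv => wmv; rewrite -coleq_col ?(line_coleq mvL wmv vmv) // eq_sym.
have [b bmu wb] := gq_proj muL wmu.
have [c cmv wc] := gq_proj mvL wmv.
have off p s m d : coleq p s -> ~~ coleq z p -> m \in L -> z \in m -> s \in m ->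
    d \in m -> ~~ col w s -> col w d -> ~~ coleq p d.
  move=> ps zp mL zm sm dm ws wd; apply: contra ws => pd.
  have pm : p \notin m by apply: contra zp => pm; apply: line_coleq mL zm pm.
  by rewrite (coleq_line_uniq mL pm sm dm ps pd).
have [yx ncyx] : y != x /\ ~~ col y x by rewrite eq_sym collinear_sym.
have nxy : ~~ coleq x y by rewrite coleq_col.
have [l lL /and3P[wl bl cl]] := third_line_through (perp2_col xy ncxy xw yw)
  (perp2_col yx ncyx yw xw) wb wc nxy
  (off x u mu b xu nzx muL zmu umu bmu nwu wb) (off y u mu b yu nzy muL zmu umu bmu nwu wb)
  (off x v mv c xv nzx mvL zmv vmv cmv nwv wc) (off y v mv c yv nzy mvL zmv vmv cmv nwv wc).
have wz : w != z by apply: contraNneq nzw => ->; apply: coleqxx.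
have ncwz : ~~ col w z by rewrite collinear_sym -coleq_col 1?eq_sym.
have bc := perp2_line_uniq wz ncwz lL wl bl cl (line_coleq muL zmu bmu) (line_coleq mvL zmv cmv).
have bz : b != z by apply: contraNneq nzw => bz_eq; rewrite coleq_sym col_coleq // -bz_eq.
rewrite -bc in cmv; have mu_mv := gq_unique_line gqL bz muL mvL bmu zmu cmv zmv.
by move: ncuv; rewrite -coleq_col // (line_coleq muL umu) // mu_mv.
Qed.

Lemma perpset_perp2 z : coleq z u -> coleq z v -> z != x -> z != y ->
  perpset L [set x; y; z] = [set u; v; w].
Proof.
move=> zu zv zx zy; apply/setP => s; rewrite mem_perpset3 !inE -orbA.
apply/idP/idP => [/and3P[xs ys _] | /or3P[] /eqP->]; first exact: perp2_sub3.
- by rewrite xu yu zu.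
- by rewrite xv yv zv.
- by rewrite xw yw perp2_regular_noncol.
Qed.

Lemma complete_triad_perp2 z : coleq z u -> coleq z v -> z != x -> z != y ->
  complete_triad L [set x; y; z].
Proof.
move=> zu zv zx zy; have [xz yz] : x != z /\ y != z by rewrite !(eq_sym _ z).
rewrite /complete_triad /triad perpset_perp2 // !cards3 //= andbT.
have ncz s : coleq s u -> coleq s v -> s != z -> ~~ col s z.
  move=> su sv sz; have ncuv := perp2_noncol xy ncxy xu yu xv yv uv.
  by apply: (perp2_noncol uv ncuv _ _ _ _ sz); rewrite coleq_sym.
have [ncxz ncyz] := (ncz x xu xv xz, ncz y yu yv yz).
apply/forall_inP => a; rewrite !inE => /orP[/orP[]|] /eqP->;
  apply/forall_inP => b; rewrite !inE => /orP[/orP[]|] /eqP->;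
  by rewrite ?collinearxx // collinear_sym.
Qed.

End PerpTriple.

(* Otherwise t is collinear with none of x, y, u, v, w; with x0 the projection
   of t on the line xv, the third points of the lines yu and yw are two common
   neighbours of t and x0, so y lies on the line t x0. *)
Lemma perp2_cover_noncol x y u v w t : x != y -> ~~ col x y ->
  coleq x u -> coleq y u -> coleq x v -> coleq y v -> coleq x w -> coleq y w ->
  u != v -> u != w -> v != w -> [|| coleq t u, coleq t v | coleq t w].
Proof.
move=> xy ncxy xu yu xv yv xw yw uv uw vw; apply: contraT => tuvw.
have [yx ncyx] : y != x /\ ~~ col y x by rewrite eq_sym collinear_sym.
have ntx := contra (perp2_cover_x xy ncxy xu yu xv yv xw yw uv uw vw (t:=t)) tuvw.
have nty := contra (perp2_cover_x yx ncyx yu xu yv xv yw xw uv uw vw (t:=t)) tuvw.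
move: tuvw => /norP[ntu /norP[ntv ntw]].
have [lv lvL /andP[xlv vlv]] := collinear_line (perp2_col xy ncxy xv yv).
have tlv : t \notin lv by apply: contra ntv => tlv; apply: line_coleq lvL tlv vlv.
have [x0 x0lv tx0] := gq_proj lvL tlv.
have x0v : x0 != v by apply: contraNneq ntv => <-; apply: col_coleq.
have x0x : x0 != x by apply: contraNneq ntx => <-; apply: col_coleq.
have off s p q : p \in lv -> q \in lv -> coleq p s -> ~~ coleq q s -> x0 != p -> ~~ coleq x0 s.
  move=> plv qlv ps qs; apply: contra => x0s.
  have slv : s \notin lv by apply: contra qs => slv; apply: line_coleq lvL qlv slv.
  by apply/eqP; apply: (coleq_line_uniq lvL slv x0lv plv); rewrite coleq_sym.
have [vy nxy nvu nvw] : [/\ coleq v y, ~~ coleq x y, ~~ coleq v u & ~~ coleq v w].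
  have vu : v != u by rewrite eq_sym.
  by rewrite coleq_sym yv !coleq_col // ncxy !(perp2_noncol xy ncxy xv yv).
have x0y := off y v x vlv xlv vy nxy x0v.
have [x0u x0w] := (off u x v xlv vlv xu nvu x0x, off w x v xlv vlv xw nvw x0x).
have [cyu cyw] := (perp2_col yx ncyx yu xu, perp2_col yx ncyx yw xw).
have [lu luL /andP[ylu ulu]] := collinear_line cyu.
have [lw lwL /andP[ylw wlw]] := collinear_line cyw.
have [e1 /andP[e1lu e1y] /andP[te1 x0e1]] :=
  line_third_col2 luL ylu ulu (col_neq cyu) nty ntu x0y x0u.
have [e3 /andP[e3lw e3y] /andP[te3 x0e3]] :=
  line_third_col2 lwL ylw wlw (col_neq cyw) nty ntw x0y x0w.
have e13 : e1 != e3.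
  apply: contraNneq (perp2_noncol xy ncxy xu yu xw yw uw) => e13; rewrite -e13 in e3lw.
  have lu_lw := gq_unique_line gqL e1y luL lwL e1lu ylu e3lw ylw.
  by rewrite -coleq_col // (line_coleq luL ulu) // lu_lw.
move: x0y; rewrite coleq_sym (col_common2_coleq tx0 e13 te1 x0e1 te3 x0e3) //.
  exact: line_coleq luL ylu e1lu.
exact: line_coleq lwL ylw e3lw.
Qed.

Lemma perp2_regular x y u v a w : x != y -> u != v ->
  coleq x u -> coleq x v -> coleq y u -> coleq y v ->
  coleq a u -> coleq a v -> coleq w x -> coleq w y -> coleq a w.
Proof.
move=> xy uv xu xv yu yv au av wx wy.
have [cxy | ncxy] := boolP (col x y).
  have [l lL /andP[xl yl]] := collinear_line cxy.
  have on_l s : coleq s x -> coleq s y -> s \in l by apply: line_coleq2 lL xl yl xy.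
  have [ul vl] : u \in l /\ v \in l by split; apply: on_l; rewrite coleq_sym.
  by apply: (line_coleq lL (line_coleq2 lL ul vl uv au av)); rewrite on_l.
have [-> | ax] := eqVneq a x; first by rewrite coleq_sym.
have [-> | ay] := eqVneq a y; first by rewrite coleq_sym.
have [-> // | wu] := eqVneq w u; have [-> // | wv] := eqVneq w v.
by apply: (perp2_regular_noncol xy ncxy xu yu xv yv _ _ uv) => //; rewrite 1?coleq_sym // eq_sym.
Qed.

Lemma perp2_cover x y u v w t : x != y -> u != v -> u != w -> v != w ->
  coleq x u -> coleq y u -> coleq x v -> coleq y v -> coleq x w -> coleq y w ->
  [|| coleq t u, coleq t v | coleq t w].
Proof.
move=> xy uv uw vw xu yu xv yv xw yw.
have [cxy | ncxy] := boolP (col x y); last first.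
  exact: perp2_cover_noncol xy ncxy xu yu xv yv xw yw uv uw vw.
have [l lL /andP[xl yl]] := collinear_line cxy.
have on_l s : coleq x s -> coleq y s -> s \in l.
  by move=> xs ys; apply: (line_coleq2 lL xl yl xy); rewrite coleq_sym.
have ul := on_l u xu yu; have vl := on_l v xv yv; have wl := on_l w xw yw.
have [tl | tl] := boolP (t \in l); first by rewrite (line_coleq lL tl ul).
have [s] := gq_proj lL tl; rewrite (line_set3 lL ul vl wl uv uw vw) !inE.
by case/orP=> [/orP[]|] /eqP-> /col_coleq->; rewrite ?orbT.
Qed.

(* Collinearity of the product geometry, read on the pairs (x', u): see
   [collinear_linesE]. *)
Definition cross_adj (s1 s2 : T * T) : bool :=
  [&& s1.1 != s2.1, s1.2 != s2.2, coleq s1.1 s2.2 & coleq s2.1 s1.2].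

Lemma cross_adj_third th p q r :
  coleq p.1 p.2 -> coleq q.1 q.2 -> cross_adj p q -> cross_adj p r -> cross_adj q r ->
  coleq th.1 p.2 = coleq p.1 th.2 -> coleq th.1 q.2 = coleq q.1 th.2 ->
  ~~ cross_adj th p -> ~~ cross_adj th q -> cross_adj th r.
Proof.
case: th p q r => [t tau] [a al] [b be] [c ga]; rewrite /cross_adj /=.
move=> aal bbe /and4P[ab albe abe bal] /and4P[ac alga aga cal] /and4P[bc bega bga cbe].
move=> swp swq ncp ncq.
case tal: (coleq t al) in swp ncp *; case tbe: (coleq t be) in swq ncq *.
- move: ncp ncq; rewrite -swp -swq !andbT !negb_and !negbK.
  case/orP=> /eqP E1 /orP[] /eqP E2; subst.
  + by rewrite eqxx in ab.
  + by rewrite ac bega aga cbe.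
  + by rewrite bc alga bga cal.
  + by rewrite eqxx in albe.
- move: ncp; rewrite -swp !andbT !negb_and !negbK.
  by case/orP=> /eqP E; [move: tbe; rewrite E abe | move: swq; rewrite E bal].
- move: ncq; rewrite -swq !andbT !negb_and !negbK.
  by case/orP=> /eqP E; [move: tal; rewrite E bal | move: swp; rewrite E abe].
have tga : coleq t ga.
  by case/or3P: (perp2_cover t ab albe alga bega aal bal abe bbe aga bga); rewrite ?tal ?tbe.
have ctau : coleq c tau.
  have := perp2_cover tau albe ab ac bc; rewrite !(coleq_sym _ a) !(coleq_sym _ b) !(coleq_sym _ c).
  by move/(_ aal abe bal bbe cal cbe)/or3P => []; rewrite -?swp -?swq ?tal ?tbe.
rewrite tga ctau !andbT; apply/andP; split.
  by apply/eqP=> tc; move: tal; rewrite tc cal.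
by apply/eqP=> tauga; move: swp; rewrite tauga aga.
Qed.

Lemma cross_adj_swap th s p : coleq th.1 th.2 -> coleq s.1 s.2 -> coleq p.1 p.2 ->
  cross_adj th s -> cross_adj s p -> coleq th.1 p.2 = coleq p.1 th.2.
Proof.
case: th s p => [t tau] [y v] [a al]; rewrite /cross_adj /=.
move=> ttau yv aal /and4P[ty tauv tv ytau] /and4P[ya val yal av].
apply/idP/idP => [tal | atau].
  by apply: (perp2_regular ty val tv tal yv yal av aal); rewrite coleq_sym.
by apply: (perp2_regular _ _ av atau yv ytau tv ttau); rewrite 1?coleq_sym // eq_sym.
Qed.

End GQ22Theory.

Section ProductGeometry.
Variables (P P' : finType) (L : {set {set P}}) (L' : {set {set P'}}).
Variables (f : P -> P') (g : P' -> P).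
Hypotheses (fK : cancel f g) (gK : cancel g f).
Hypothesis fiso : forall l, (l \in L) = (f @: l \in L').
Local Notation coleq' := (coleq L').
Local Notation points := (calP L' f).
Local Notation lines := (calL L L' f).

Let f_inj : injective f := can_inj fK.

Definition embed (s : P * P') : P' * P' := (f s.1, s.2).

Lemma collinear_iso x y : collinear L x y = collinear L' (f x) (f y).
Proof.
rewrite /collinear (inj_eq f_inj); congr (_ && _).
apply/exists_inP/exists_inP => [[l lL /andP[xl yl]] | [l' l'L /andP[xl yl]]].
  by exists (f @: l); rewrite -?fiso ?imset_f.
exists (g @: l'); last by rewrite -{1}(fK x) -{1}(fK y) !imset_f.
by rewrite fiso -imset_comp (eq_imset _ gK) imset_id.
Qed.

Lemma perpset_iso (A : {set P}) : perpset L' (f @: A) = f @: perpset L A.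
Proof.
apply/setP => z'; rewrite -(gK z') mem_imset //.
apply/bigcapP/bigcapP => [zP i iA | zP _ /imsetP[i iA ->]].
  by have := zP _ (imset_f f iA); rewrite !inE (inj_eq f_inj) collinear_iso.
by have := zP _ iA; rewrite !inE (inj_eq f_inj) collinear_iso.
Qed.

Lemma complete_triad_iso (A : {set P}) : complete_triad L A = complete_triad L' (f @: A).
Proof.
rewrite /complete_triad /triad perpset_iso !card_imset //; congr ((_ && _) && _).
apply/forall_inP/forall_inP => [noncol _ /imsetP[x xA ->] | noncol x xA].
  by apply/forall_inP => _ /imsetP[y yA ->]; rewrite -collinear_iso (forall_inP (noncol x xA)).
by apply/forall_inP => y yA; rewrite collinear_iso (forall_inP (noncol _ (imset_f f xA))) ?imset_f.
Qed.

Lemma mem_points s : (s \in points) = coleq' (f s.1) s.2.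
Proof. by rewrite inE mem_perp. Qed.

Lemma imset_set3 x y z : f @: [set x; y; z] = [set f x; f y; f z].
Proof. by rewrite !imsetU !imset_set1. Qed.

Lemma lines_inv X : X \in lines -> exists x y z u v w,
  [/\ X = [set (x, u); (y, v); (z, w)], [&& x != y, y != z & x != z],
      [&& u != v, v != w & u != w], X \subset points &
      perpset L' [set f x; f y; f z] = [set u; v; w]].
Proof.
rewrite inE => /existsP[x /existsP[y /existsP[z /existsP[u /existsP[v /existsP[w]]]]]].
case/and5P=> /eqP-> Xpts xyz _ /andP[/eqP Ep uvw].
by exists x, y, z, u, v, w; rewrite -imset_set3.
Qed.

Lemma lines_sub_points X : X \in lines -> X \subset points.
Proof. by case/lines_inv=> [x [y [z [u [v [w []]]]]]]. Qed.

Lemma lines_cross_adj X s1 s2 : X \in lines -> s1 \in X -> s2 \in X -> s1 != s2 ->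
  cross_adj L' (embed s1) (embed s2).
Proof.
case/lines_inv=> [x [y [z [u [v [w [-> /and3P[xy yz xz] /and3P[uv vw uw] _ Ep]]]]]]].
have in3 s : s \in [set (x, u); (y, v); (z, w)] ->
    (f s.1 \in [set f x; f y; f z]) && (s.2 \in [set u; v; w]).
  by rewrite !inE => /orP[/orP[]|] /eqP-> /=; rewrite !eqxx ?orbT.
have coleqX s s' : s \in [set (x, u); (y, v); (z, w)] -> s' \in [set (x, u); (y, v); (z, w)] ->
    coleq' (f s.1) s'.2.
  by move=> /in3/andP[fs _] /in3/andP[_]; rewrite -Ep => /bigcapP/(_ _ fs); rewrite mem_perp.
move=> s1X s2X s12; rewrite /cross_adj /= (inj_eq f_inj) !coleqX //.
have inj1 := @set3_inj_in _ _ fst (x, u) (y, v) (z, w) xy xz yz.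
have inj2 := @set3_inj_in _ _ snd (x, u) (y, v) (z, w) uv uw vw.
by rewrite (inj_in_eq inj1) ?(inj_in_eq inj2) ?s12.
Qed.

Lemma set3_mem_lines x y z u v w :
  [&& x != y, y != z & x != z] -> [&& u != v, v != w & u != w] ->
  ([set x; y; z] \in L) || complete_triad L [set x; y; z] ->
  perpset L' [set f x; f y; f z] = [set u; v; w] ->
  coleq' (f x) u -> coleq' (f y) v -> coleq' (f z) w ->
  [set (x, u); (y, v); (z, w)] \in lines.
Proof.
move=> xyz uvw Lxyz Ep xu yv zw; rewrite inE.
apply/existsP; exists x; apply/existsP; exists y; apply/existsP; exists z.
apply/existsP; exists u; apply/existsP; exists v; apply/existsP; exists w.
rewrite eqxx xyz uvw Lxyz imset_set3 Ep eqxx !andbT.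
by apply/subsetP => s; rewrite mem_points !inE => /orP[/orP[]|] /eqP->.
Qed.

Lemma neq_g x s : f x != s -> x != g s.
Proof. by apply: contra_neq => ->; rewrite gK. Qed.

Hypothesis gqL' : GQ22 L'.

Lemma collinear_lines_col x y u v : x != y -> u != v ->
  coleq' (f x) u -> coleq' (f y) v -> coleq' (f x) v -> coleq' (f y) u ->
  collinear L' (f x) (f y) -> collinear lines (x, u) (y, v).
Proof.
move=> xy uv xu yv xv yu cxy; have fxy : f x != f y by rewrite (inj_eq f_inj).
have [l lL /andP[xl yl]] := collinear_line cxy.
have [ul vl] : u \in l /\ v \in l.
  by split; apply: (line_coleq2 gqL' lL xl yl fxy); rewrite coleq_sym.
have [z' z'l /andP[zx zy]] := line_other gqL' (f x) (f y) lL.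
have [w wl /andP[wu wv]] := line_other gqL' u v lL.
have [xz yz] : f x != z' /\ f y != z' by rewrite !(eq_sym _ z').
have El := line_set3 gqL' lL xl yl z'l fxy xz yz.
rewrite /collinear; apply/andP; split; first by apply: contra xy => /eqP[->].
apply/exists_inP; exists [set (x, u); (y, v); (g z', w)]; last by rewrite !inE !eqxx ?orbT.
apply: set3_mem_lines; rewrite ?gK.
- by rewrite xy !neq_g.
- by rewrite uv eq_sym wv eq_sym wu.
- by rewrite fiso imset_set3 gK -El lL.
- by rewrite -El perpset_line // (line_set3 gqL' lL ul vl wl) // eq_sym.
- by rewrite xu.
- by rewrite yv.
- exact: line_coleq lL z'l wl.
Qed.

Lemma collinear_lines_noncol x y u v : x != y -> u != v ->
  coleq' (f x) u -> coleq' (f y) v -> coleq' (f x) v -> coleq' (f y) u ->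
  ~~ collinear L' (f x) (f y) -> collinear lines (x, u) (y, v).
Proof.
move=> xy uv xu yv xv yu ncxy; have fxy : f x != f y by rewrite (inj_eq f_inj).
have [w [xw yw wu wv]] := perp2_other gqL' fxy ncxy xu yu xv yv.
have ncuv := perp2_noncol gqL' fxy ncxy xu yu xv yv uv.
have [ux uy vx vy] : [/\ coleq' u (f x), coleq' u (f y), coleq' v (f x) & coleq' v (f y)].
  by rewrite !(coleq_sym _ u) !(coleq_sym _ v).
have [z' [uz vz zx zy]] := perp2_other gqL' uv ncuv ux vx uy vy.
have [uw vw] : u != w /\ v != w by rewrite !(eq_sym _ w).
have [zu zv] : coleq' z' u /\ coleq' z' v by rewrite !(coleq_sym _ z').
have triple := perpset_perp2 gqL' fxy ncxy xu yu xv yv xw yw uv uw vw zu zv zx zy.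
have triad := complete_triad_perp2 gqL' fxy ncxy xu yu xv yv xw yw uv uw vw zu zv zx zy.
have zw := perp2_regular_noncol gqL' fxy ncxy xu yu xv yv xw yw uv uw vw zu zv zx zy.
rewrite /collinear; apply/andP; split; first by apply: contra xy => /eqP[->].
apply/exists_inP; exists [set (x, u); (y, v); (g z', w)]; last by rewrite !inE !eqxx ?orbT.
apply: set3_mem_lines; rewrite ?gK ?triple //.
- by rewrite xy !neq_g 1?eq_sym.
- by rewrite uv vw uw.
- by rewrite complete_triad_iso imset_set3 gK triad orbT.
Qed.

Lemma collinear_linesE s1 s2 : s1 \in points -> s2 \in points ->
  collinear lines s1 s2 = cross_adj L' (embed s1) (embed s2).
Proof.
case: s1 s2 => [x u] [y v]; rewrite !mem_points /= => xu yv.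
apply/idP/idP => [/andP[s12 /exists_inP[X XL /andP[s1X s2X]]] | ].
  exact: lines_cross_adj XL s1X s2X s12.
rewrite /cross_adj /= (inj_eq f_inj) => /and4P[xy uv xv yu].
have [cxy | ncxy] := boolP (collinear L' (f x) (f y)).
  exact: collinear_lines_col.
exact: collinear_lines_noncol.
Qed.

Lemma collinear_lines_points s1 s2 : collinear lines s1 s2 -> (s1 \in points) && (s2 \in points).
Proof.
case/andP=> _ /exists_inP[X /lines_sub_points/subsetP Xpts /andP[s1X s2X]].
by rewrite !Xpts.
Qed.

Lemma dist2_cross_adj th p : th \in points -> p \in points -> dist_eq lines th p 2 ->
  ~~ cross_adj L' (embed th) (embed p) /\ coleq' (f th.1) p.2 = coleq' (f p.1) th.2.
Proof.
move=> thP pP [[s [ths [p' [sp ep]]]] short]; subst p'; split.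
  by rewrite -collinear_linesE //; apply/negP => thp; apply: (short 1) => //; exists p.
have /andP[_ sP] := collinear_lines_points ths.
apply: (cross_adj_swap gqL' (th := embed th) (s := embed s) (p := embed p));
  by rewrite -?mem_points -?collinear_linesE.
Qed.

End ProductGeometry.

Theorem proposition3p5 (P P' : finType) (L : {set {set P}}) (L' : {set {set P'}})
  (f : P -> P') :
  GQ22 L -> GQ22 L' -> is_iso L L' f ->
  forall (Ln : {set P * P'}) (theta p q r : P * P'),
    Ln \in calL L L' f -> theta \in calP L' f ->
    p \in Ln -> q \in Ln -> r \in Ln -> p != q -> r != p -> r != q ->
    dist_eq (calL L L' f) theta p 2 -> dist_eq (calL L L' f) theta q 2 ->
    collinear (calL L L' f) theta r.
Proof.
move=> _ gqL' [[g fK gK] fiso] Ln th p q r LnL thP pLn qLn rLn pq rp rq dist_p dist_q.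
have /subsetP Ln_pts := lines_sub_points LnL.
have [pP qP rP] := And3 (Ln_pts p pLn) (Ln_pts q qLn) (Ln_pts r rLn).
have [ncp swp] := dist2_cross_adj fK gK fiso gqL' thP pP dist_p.
have [ncq swq] := dist2_cross_adj fK gK fiso gqL' thP qP dist_q.
rewrite (collinear_linesE fK gK fiso gqL' thP rP).
apply: (@cross_adj_third _ _ gqL' (embed f th) (embed f p) (embed f q) (embed f r)
  _ _ _ _ _ swp swq ncp ncq);
  rewrite /= -?mem_points //; apply: (lines_cross_adj fK LnL) => //; by rewrite eq_sym.
Qed.
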